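(* Let $\mathcal A$ be a weighted ODCA over $\mathbb F$, $K=|Q|\cdot|C|$, $c$ a configuration with counter value $n$, $V\subseteq\mathbb F^{|Q|}$ a subspace and $S\subseteq C$. If $z$ is a minimal witness for $(c,\overline V,S,\mathbb N)$, then every counter value occurring in the run of $z$ from $c$ is less than $\max(n,K)+K^2$.
   Context: Fix a field $\mathbb{F}$ and a finite alphabet $\Sigma$. For $n\in\mathbb N$ let $\mathrm{sgn}(n)=0$ if $n=0$ and $1$ if $n>0$. A weighted ODCA is $\mathcal{A}=((C,\delta_0,\delta_1,p_0),(Q,\lambda,\Delta,\eta))$ where $C$ is a finite nonempty set of counter states, $\delta_0:C\times\Sigma\to C\times\{0,+1\}$ and $\delta_1:C\times\Sigma\to C\times\{-1,0,+1\}$ are deterministic counter transition functions, $p_0\in C$, $Q$ is a finite nonempty set of states, $\lambda,\eta\in\mathbb{F}^{|Q|}$, and $\Delta:\Sigma\times\{0,1\}\to\mathbb{F}^{|Q|\times|Q|}$. A configuration is a triple $(x,p,n)\in\mathbb{F}^{|Q|}\times C\times\mathbb{N}$ (weight vector, counter state, counter value). Reading $a\in\Sigma$ from $(x,p,n)$ with $d=\mathrm{sgn}(n)$ and $\delta_d(p,a)=(p',e)$ leads to $(x\Delta(a,d),p',n+e)$; for each word $w$ and configuration $c$ there is a unique run of $w$ from $c$. For a subspace $V\subseteq\mathbb F^{|Q|}$ let $\overline V=\mathbb F^{|Q|}\setminus V$. For $S\subseteq C$ and $X\subseteq\mathbb N$, a word $z$ is a witness for $(c,\overline V,S,X)$ if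 the run of $z$ from $c$ ends in a configuration $(x,p,n)$ with $x\in\overline V$, $p\in S$, $n\in X$; it is a minimal witness if no strictly shorter word is a witness. *)

From HB Require Import structures.
From mathcomp Require Import all_boot all_order all_algebra.
Set Implicit Arguments. Unset Strict Implicit. Unset Printing Implicit Defensive.
Import GRing.Theory.
Local Open Scope ring_scope.

Inductive eff := Dec | Stay | Inc.

Definition apply_eff (e : eff) (n : nat) : nat :=
  match e with Dec => n.-1 | Stay => n | Inc => n.+1 end.

(* A weighted ODCA over field F and alphabet Sigma, counter states C
   (a nonempty finite type) and |Q| = q states (q > 0).
   delta0 has effects in {0,+1}: a boolean "increment" flag.
   delta1 has effects in {-1,0,+1}. Delta a d with d : bool (false = 0, true = 1). *)
Record ODCA (F : fieldType) (Sigma C : finType) (q : nat) := {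
  delta0 : C -> Sigma -> C * bool;
  delta1 : C -> Sigma -> C * eff;
  p0 : C;
  lam : 'rV[F]_q;
  Delta : Sigma -> bool -> 'M[F]_q;
  eta : 'rV[F]_q
}.

Definition config (F : fieldType) (C : finType) (q : nat) :=
  ('rV[F]_q * C * nat)%type.

Section Run.
Variables (F : fieldType) (Sigma C : finType) (q : nat) (A : ODCA F Sigma C q).

Definition step (c : config F C q) (a : Sigma) : config F C q :=
  let: (x, p, n) := c in
  if n == 0%N then
    let: (p', b) := delta0 A p a in (x *m Delta A a false, p', n + b)%N
  else
    let: (p', e) := delta1 A p a in (x *m Delta A a true, p', apply_eff e n).

Definition run (c : config F C q) (w : seq Sigma) : seq (config F C q) :=
  c :: scanl step c w.

Definition final (c : config F C q) (w : seq Sigma) : config F C q :=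
  foldl step c w.

Definition is_witness (c : config F C q) (V : {vspace 'rV[F]_q}) (S : {set C})
    (X : pred nat) (z : seq Sigma) : Prop :=
  let: (x, p, n) := final c z in [/\ x \notin V, p \in S & X n].

Definition is_minimal_witness (c : config F C q) (V : {vspace 'rV[F]_q})
    (S : {set C}) (X : pred nat) (z : seq Sigma) : Prop :=
  is_witness c V S X z /\
  forall z', (size z' < size z)%N -> ~ is_witness c V S X z'.

End Run.

(* Suppose the counter reaches max(n, K) + K^2 at some position i of the run. For each
   level l between max(n, K) and max(n, K) + K^2, look at the excursion above l around i:
   from the last visit of level l before i to the first return to l after i (or the end
   of the run). By pigeonhole, q^2 + 1 levels l_0 < ... < l_(q^2) share the counter states
   at both ends of their excursions. For j < k, the excursion above l_k replayed from
   level l_j keeps a positive counter, so it behaves exactly as before; substituting it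
   for the excursion above l_j yields a shorter word ending in the same counter state,
   whose weight x_j M_k N_j lies in V by minimality, whereas x_j M_j N_j is the final
   weight, outside V. Composed with a linear form vanishing on V this is a triangular
   system, so the q^2 + 1 matrices M_j are linearly independent in a space of
   dimension q^2: a contradiction. *)

From HB Require Import structures.
From mathcomp Require Import all_boot all_order all_algebra.
From mathcomp Require Import zify.
Set Implicit Arguments. Unset Strict Implicit. Unset Printing Implicit Defensive.
Import GRing.Theory.
Local Open Scope ring_scope.
Local Open Scope nat_scope.

Section LinearAlgebra.
Local Open Scope ring_scope.

Lemma free_triangular (K : fieldType) (vT : vectType K) (s : seq nat)
    (w : nat -> vT) (phi : nat -> {scalar vT}) :
    sorted ltn s -> {in s, forall k, phi k (w k) != 0} ->
    {in s &, forall j k, (j < k)%N -> phi j (w k) = 0} ->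
  free (map w s).
Proof.
elim: s => [|j s IH] /= s_sorted phi_diag phi_upper; first exact: nil_free.
have j_lt : all (ltn j) s := order_path_min ltn_trans s_sorted.
have free_s : free (map w s).
  apply: IH (path_sorted s_sorted) _ _ => [k ks|k l ks ls].
    by apply: phi_diag; rewrite inE ks orbT.
  by apply: phi_upper; rewrite inE ?ks ?ls orbT.
rewrite free_cons free_s andbT.
move: (phi_diag j (mem_head j s)); apply: contra => /(@coord_span _ _ _ (in_tuple _)) ->.
rewrite linear_sum big1 // => i _; have i_lt : (i < size s)%N by rewrite -(size_map w).
rewrite linearZ /= (nth_map 0%N) // phi_upper ?mulr0 ?mem_head //.
  by rewrite inE mem_nth ?orbT.
by apply: (allP j_lt); rewrite mem_nth.
Qed.

Lemma triangular_mx_size (K : fieldType) (q : nat) (s : seq nat)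
    (a : nat -> 'rV[K]_q) (X : nat -> 'M[K]_q) (b : nat -> 'cV[K]_q) :
    sorted ltn s -> {in s, forall k, a k *m X k *m b k != 0} ->
    {in s &, forall j k, (j < k)%N -> a j *m X k *m b j = 0} ->
  (size s <= q * q)%N.
Proof.
move=> s_sorted diag upper.
pose phi j : {scalar 'M[K]_q} := mxtrace \o mulmx (b j *m a j).
have phiE j k : phi j (X k) = (a j *m X k *m b j) 0 0.
  by rewrite /= -[b j *m _ *m _]mulmxA mxtrace_mulC trace_mx11.
have /eqP free_s : free (map X s).
  apply: (free_triangular (phi := phi)) => // [k ks|j k js ks jk].
    rewrite phiE; apply: contra (diag k ks) => /eqP ak0.
    by apply/eqP; rewrite [LHS]mx11_scalar ak0 raddf0.
  by rewrite phiE upper ?mxE.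
by rewrite -(size_map X) -free_s (leq_trans (dimvS (subvf _))) // dimvf dim_matrix.
Qed.

Lemma separating_cV (K : fieldType) (q : nat) (V : {vspace 'rV[K]_q}) (y : 'rV[K]_q) :
  y \notin V -> exists2 e : 'cV[K]_q, {in V, forall v, v *m e = 0} & y *m e != 0.
Proof.
pose P := lin1_mx (\1 - projv V)%VF.
have PE v : v *m P = v - projv V v by rewrite mul_rV_lin1 /= !lfunE /= !lfunE.
have kerP v : (v *m P == 0) = (v \in V).
  by rewrite PE subr_eq0; apply/eqP/idP => [->|/projv_id //]; apply: memv_proj.
rewrite -kerP => /rV0Pn[j yPj].
exists (P *m delta_mx j 0) => [v /projv_id vV|].
  by rewrite mulmxA PE vV subrr mul0mx.
by apply: contra yPj => /eqP/rowP/(_ 0); rewrite mulmxA -colE !mxE => ->.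
Qed.

End LinearAlgebra.

Lemma pigeonhole_count (I : Type) (T : finType) (g : I -> T) (s : seq I) M :
  #|T| * M < size s -> exists t, M < count (fun r => g r == t) s.
Proof.
move=> size_s; apply/existsP; apply: contraLR size_s => /existsPn few.
rewrite -leqNgt -sum1_size (partition_big g predT) //= -sum_nat_const.
by apply: leq_sum => t _; rewrite sum1_count leqNgt few.
Qed.

Section UnitSteps.
Variables (f : nat -> nat) (L i : nat).
Hypothesis f_step : forall k, k < L -> f k.+1 <= (f k).+1 /\ f k <= (f k.+1).+1.
Hypothesis i_le_L : i <= L.

Definition last_at_most l := i - find (fun k => f (i - k) <= l) (iota 0 i.+1).
(* [first_at_most l] is [L] when [f] stays above [l] from [i] on. *)
Definition first_at_most l := i + find (fun k => f (i + k) <= l) (iota 0 (L - i)).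

Lemma last_at_most_le l : last_at_most l <= i.
Proof. exact: leq_subr. Qed.

Lemma first_at_most_ge l : i <= first_at_most l.
Proof. exact: leq_addr. Qed.

Lemma first_at_most_le l : first_at_most l <= L.
Proof.
have := find_size (fun k => f (i + k) <= l) (iota 0 (L - i)).
by rewrite size_iota /first_at_most; lia.
Qed.

Lemma lt_before_first_at_most l k : i <= k < first_at_most l -> l < f k.
Proof.
move=> /andP[ik k_lt]; have k_find : k - i < find (fun k => f (i + k) <= l) (iota 0 (L - i)).
  by move: k_lt; rewrite /first_at_most; lia.
have := before_find 0 k_find; rewrite nth_iota ?add0n ?subnKC //.
  by move/negbT; rewrite -ltnNge.
have := find_size (fun k => f (i + k) <= l) (iota 0 (L - i)); rewrite size_iota; lia.
Qed.

Section Level.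
Variable l : nat.
Hypotheses (f0_le : f 0 <= l) (le_fi : l <= f i).

Lemma lt_after_last_at_most k : last_at_most l < k <= i -> l < f k.
Proof.
move=> /andP[lt_k ki]; have k_find : i - k < find (fun k => f (i - k) <= l) (iota 0 i.+1).
  by move: lt_k; rewrite /last_at_most; lia.
have := before_find 0 k_find; rewrite nth_iota ?add0n ?subKn //; last lia.
by move/negbT; rewrite -ltnNge.
Qed.

Lemma f_last_at_most : f (last_at_most l) = l.
Proof.
have has_le : has (fun k => f (i - k) <= l) (iota 0 i.+1).
  by apply/hasP; exists i; rewrite ?mem_iota //= subnn.
apply/eqP; rewrite eqn_leq; have := nth_find 0 has_le.
rewrite nth_iota ?add0n => [-> /=|]; last by move: has_le; rewrite has_find size_iota.
have [->|ne] := eqVneq (last_at_most l) i; first exact: le_fi.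
have lt_i : last_at_most l < i by rewrite ltn_neqAle ne last_at_most_le.
have := lt_after_last_at_most (k := (last_at_most l).+1); rewrite ltnSn lt_i => /(_ isT).
by have [+ _] := f_step (leq_trans lt_i i_le_L); lia.
Qed.

Lemma f_first_at_most : first_at_most l < L -> f (first_at_most l) = l.
Proof.
move=> lt_L; have has_le : has (fun k => f (i + k) <= l) (iota 0 (L - i)).
  by rewrite has_find size_iota; move: lt_L; rewrite /first_at_most; lia.
apply/eqP; rewrite eqn_leq; have := nth_find 0 has_le.
rewrite nth_iota ?add0n => [-> /=|]; last by move: has_le; rewrite has_find size_iota.
have [->|ne] := eqVneq (first_at_most l) i; first exact: le_fi.
have gt_i : i < first_at_most l by rewrite ltn_neqAle eq_sym ne first_at_most_ge.
have [k Ek] : exists k, first_at_most l = k.+1 by exists (first_at_most l).-1; lia.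
have := lt_before_first_at_most (l := l) (k := k); have [_] := f_step (k := k) ltac:(lia).
by rewrite -Ek; lia.
Qed.

Lemma le_between_at_most k : last_at_most l <= k < first_at_most l -> l <= f k.
Proof.
move=> /andP[lo_k k_hi]; have [ki|ik] := leqP k i.
  have [<-|ne] := eqVneq (last_at_most l) k; first by rewrite f_last_at_most.
  by apply/ltnW/lt_after_last_at_most; rewrite ltn_neqAle ne lo_k.
by apply/ltnW/(lt_before_first_at_most (l := l)); rewrite k_hi ltnW.
Qed.

End Level.

Section TwoLevels.
Variables l l' : nat.
Hypotheses (f0_le : f 0 <= l) (lt_l : l < l') (le_fi : l' <= f i).

Lemma last_at_most_lt : last_at_most l < last_at_most l'.
Proof.
have f_lo : f (last_at_most l) = l by apply: f_last_at_most; lia.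
have f_lo' : f (last_at_most l') = l' by apply: f_last_at_most; lia.
rewrite ltn_neqAle; apply/andP; split.
  by apply/eqP => E; move: f_lo'; rewrite -E f_lo; lia.
rewrite leqNgt; apply/negP => lt_lo.
have := lt_after_last_at_most (l := l') ltac:(lia) le_fi (k := last_at_most l).
by rewrite lt_lo last_at_most_le f_lo; lia.
Qed.

Lemma first_at_most_mono : first_at_most l' <= first_at_most l.
Proof.
have [lt_L|] := ltnP (first_at_most l) L; last by move/(leq_trans (first_at_most_le l')).
rewrite leqNgt; apply/negP => lt_hi.
have := lt_before_first_at_most (l := l') (k := first_at_most l).
by rewrite first_at_most_ge lt_hi f_first_at_most //; lia.
Qed.

End TwoLevels.
End UnitSteps.

Section Steps.
Variables (F : fieldType) (Sigma C : finType) (q : nat) (A : ODCA F Sigma C q).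

Lemma stepE x p n a : step A (x, p, n) a =
  (x *m Delta A a (n != 0), (step A (0%R, p, n) a).1.2, (step A (0%R, p, n) a).2).
Proof. by rewrite /step; case: (n == 0); [case: delta0 | case: delta1]. Qed.

Lemma step_shift x p n d a : 0 < n ->
  step A (x, p, n + d) a = let: (y, p', m) := step A (x, p, n) a in (y, p', m + d).
Proof.
move=> n_gt0; rewrite /step; have [-> ->] : (n + d == 0) = false /\ (n == 0) = false.
  by split; apply/eqP; lia.
by case: delta1 => p' [] //=; congr (_, _, _); lia.
Qed.

Lemma step_counter x p n a :
  (step A (x, p, n) a).2 <= n.+1 /\ n <= (step A (x, p, n) a).2.+1.
Proof.
rewrite /step; case: eqP => [->|_]; first by case: delta0 => ? [].
by case: delta1 => ? [] /=; lia.
Qed.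

Lemma final_cons c a w : final A c (a :: w) = final A (step A c a) w.
Proof. by []. Qed.

Lemma final_cat c w w' : final A c (w ++ w') = final A (final A c w) w'.
Proof. exact: foldl_cat. Qed.

Fixpoint word_mx (p : C) (n : nat) (w : seq Sigma) : 'M[F]_q :=
  if w is a :: w' then
    Delta A a (n != 0) *m word_mx (step A (0%R, p, n) a).1.2 (step A (0%R, p, n) a).2 w'
  else 1%:M%R.

Lemma word_mx_cons p n a w : word_mx p n (a :: w) =
  Delta A a (n != 0) *m word_mx (step A (0%R, p, n) a).1.2 (step A (0%R, p, n) a).2 w.
Proof. by []. Qed.

Lemma finalE x p n w : final A (x, p, n) w =
  (x *m word_mx p n w, (final A (0%R, p, n) w).1.2, (final A (0%R, p, n) w).2).
Proof.
elim: w x p n => [|a w IH] x p n; first by rewrite /= mulmx1.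
rewrite !final_cons (stepE x) word_mx_cons; have := stepE 0%R p n a; rewrite mul0mx.
case: (step A (0%R, p, n) a) => [[y p'] m] /= [->].
by rewrite IH mulmxA.
Qed.

Lemma final_shift x p n d w :
    (forall k, k < size w -> d < (final A (x, p, n + d) (take k w)).2) ->
  final A (x, p, n + d) w = let: (y, p', m) := final A (x, p, n) w in (y, p', m + d).
Proof.
elim: w x p n => [|a w IH] x p n above_d; first by [].
have n_gt0 : 0 < n by have := above_d 0 isT; rewrite /=; lia.
rewrite !final_cons step_shift //; case E: (step A (x, p, n) a) => [[y p'] m].
apply: IH => k k_lt; have := above_d k.+1 k_lt.
by rewrite [take _ _]/= final_cons step_shift // E.
Qed.

End Steps.

Section Run.
Variables (F : fieldType) (Sigma C : finType) (q : nat) (A : ODCA F Sigma C q).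
Variables (c : config F C q) (z : seq Sigma).
Local Notation L := (size z).

Definition conf k := final A c (take k z).
Definition weight k := (conf k).1.1.
Definition state k := (conf k).1.2.
Definition counter k := (conf k).2.
Definition slice u v := drop u (take v z).

Lemma confE k : conf k = (weight k, state k, counter k).
Proof. by rewrite /weight /state /counter; case: (conf k) => [[]]. Qed.

Lemma final_slice u v : u <= v -> final A (conf u) (slice u v) = conf v.
Proof.
move=> uv; rewrite /conf -final_cat; congr final.
by rewrite /slice -{2}(cat_take_drop u (take v z)) take_takel.
Qed.

Lemma size_slice u v : u <= v <= L -> size (slice u v) = v - u.
Proof. by case/andP=> uv vL; rewrite size_drop size_takel. Qed.

Lemma take_slice u v k : u + k <= v -> take k (slice u v) = slice u (u + k).
Proof. by move=> le_v; rewrite take_drop addnC take_takel. Qed.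

Lemma final_slice_weight x u v : u <= v ->
  final A (x, state u, counter u) (slice u v) =
    (x *m word_mx A (state u) (counter u) (slice u v), state v, counter v).
Proof.
move=> uv; have := final_slice uv; rewrite [conf u]confE [conf v]confE finalE.
by case=> _ <- <-; apply: finalE.
Qed.

Lemma weight_slice u v : u <= v ->
  weight v = weight u *m word_mx A (state u) (counter u) (slice u v).
Proof.
move=> uv; have := final_slice uv.
by rewrite [conf u]confE final_slice_weight // [conf v]confE; case.
Qed.

Lemma final_slice_lower t t' u' d : t' <= u' <= L ->
    state t = state t' -> counter t' = counter t + d ->
    (forall k, t' <= k < u' -> d < counter k) ->
  final A (conf t) (slice t' u') =
    (weight t *m word_mx A (state t') (counter t') (slice t' u'), state u', counter u' - d).
Proof.
move=> le_u' st ct above_d.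
have above k : k < size (slice t' u') ->
    d < (final A (weight t, state t', counter t + d) (take k (slice t' u'))).2.
  rewrite -ct size_slice // => k_lt; rewrite take_slice; last by lia.
  by rewrite final_slice_weight ?leq_addr //= above_d //; lia.
have := final_shift above; rewrite -ct final_slice_weight ?[conf t]confE ?st //.
  by case: final => [[y p'] m] [<- <- ->]; rewrite addnK.
by case/andP: le_u'.
Qed.

Lemma counter_step k : k < L -> counter k.+1 <= (counter k).+1 /\ counter k <= (counter k.+1).+1.
Proof.
move=> kL; rewrite /counter -(final_slice (leqnSn k)) [conf k]confE.
have : size (slice k k.+1) = 1 by rewrite size_slice ?leqnSn ?subSnn.
by case: (slice k k.+1) => [|a []] // _; apply: step_counter.
Qed.

Lemma mem_run_conf cfg : cfg \in run A c z -> exists2 k, k <= L & cfg = conf k.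
Proof.
move=> /(nthP c) [k]; rewrite /run /= ltnS size_scanl => kL <-.
by exists k => //; rewrite nth_cons_scanl.
Qed.

Lemma witness_end V S (X : pred nat) : is_witness A c V S X z ->
  [/\ weight L \notin V, state L \in S & X (counter L)].
Proof.
rewrite /is_witness; have -> : final A c z = conf L by rewrite /conf take_size.
by rewrite confE.
Qed.

Section Excursion.
Variable i : nat.
Hypothesis i_le_L : i <= L.

Definition excursion_start l := last_at_most counter i l.
Definition excursion_end l := first_at_most counter L i l.
Definition excursion_mx l := word_mx A (state (excursion_start l))
  (counter (excursion_start l)) (slice (excursion_start l) (excursion_end l)).
Definition suffix_mx l :=
  word_mx A (state (excursion_end l)) (counter (excursion_end l)) (slice (excursion_end l) L).

Lemma excursion_start_le_end l : excursion_start l <= excursion_end l.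
Proof. exact: leq_trans (last_at_most_le _ _ _) (first_at_most_ge _ _ _ _). Qed.

Lemma weight_excursion l :
  weight L = weight (excursion_start l) *m excursion_mx l *m suffix_mx l.
Proof.
rewrite (weight_slice (first_at_most_le counter i_le_L l)).
by rewrite (weight_slice (excursion_start_le_end l)).
Qed.

Section TwoLevels.
Variables l l' : nat.
Hypotheses (c0_le : counter 0 <= l) (l_gt0 : 0 < l) (lt_l : l < l') (le_ci : l' <= counter i).

Lemma pump_excursion :
    state (excursion_start l) = state (excursion_start l') ->
    state (excursion_end l') = state (excursion_end l) ->
  exists2 w, size w < L &
    (final A c w).1 = (weight (excursion_start l) *m excursion_mx l' *m suffix_mx l, state L).
Proof.
move=> state_start state_end.
have [l_le l'_le] : l <= counter i /\ counter 0 <= l' by split; lia.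
have t_lt : excursion_start l < excursion_start l' :=
  last_at_most_lt counter_step i_le_L c0_le lt_l le_ci.
have u_le : excursion_end l' <= excursion_end l :=
  first_at_most_mono counter_step i_le_L c0_le lt_l le_ci.
have ct : counter (excursion_start l) = l := f_last_at_most counter_step i_le_L c0_le l_le.
have ct' : counter (excursion_start l') = l' := f_last_at_most counter_step i_le_L l'_le le_ci.
have uL : excursion_end l <= L := first_at_most_le counter i_le_L l.
have t'u' := excursion_start_le_end l'.
rewrite /excursion_mx /suffix_mx.
set t := excursion_start l in t_lt ct state_start *.
set t' := excursion_start l' in t_lt ct' state_start t'u' *.
set u := excursion_end l in u_le uL state_end *.
set u' := excursion_end l' in u_le t'u' state_end *.
(* Cut out the two pieces of the excursion above [l] that surround the one above [l']. *)
exists (take t z ++ slice t' u' ++ slice u L).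
  have u'L : u' <= L by lia.
  by rewrite !size_cat size_takel ?size_slice ?t'u' ?u'L ?uL ?leqnn //; lia.
rewrite !final_cat -/(conf t) (final_slice_lower (d := l' - l)) //; first last.
- move=> k /(le_between_at_most counter_step i_le_L l'_le le_ci); lia.
- by rewrite ct ct'; lia.
- by rewrite t'u' (leq_trans u_le).
have [u_lt|L_le_u] := ltnP u L.
  have cu : counter u = l := f_first_at_most counter_step i_le_L c0_le l_le u_lt.
  have cu' : counter u' = l' :=
    f_first_at_most counter_step i_le_L l'_le le_ci (leq_ltn_trans u_le u_lt).
  rewrite cu' (_ : l' - (l' - l) = counter u); last by rewrite cu; lia.
  by rewrite state_end final_slice_weight.
have uL' : u = L by apply/eqP; rewrite eqn_leq uL L_le_u.
by rewrite state_end uL' /slice take_size drop_size /= mulmx1.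
Qed.

Lemma minimal_witness_pump V S :
    is_minimal_witness A c V S predT z ->
    state (excursion_start l) = state (excursion_start l') ->
    state (excursion_end l') = state (excursion_end l) ->
  weight (excursion_start l) *m excursion_mx l' *m suffix_mx l \in V.
Proof.
case=> /witness_end[_ SL _] minimal state_start state_end.
have [w w_lt final_w] := pump_excursion state_start state_end.
apply/negPn/negP => notV; apply: (minimal w w_lt).
by rewrite /is_witness; case: (final A c w) final_w => [[x p] n] [-> ->].
Qed.

End TwoLevels.

End Excursion.

End Run.

Theorem mainTheorem13 (F : fieldType) (Sigma C : finType) (q : nat)
  (A : ODCA F Sigma C q) (c : config F C q)
  (V : {vspace 'rV[F]_q}) (S : {set C}) (z : seq Sigma) :
  (0 < q)%N ->
  let K := (q * #|C|)%N in
  is_minimal_witness A c V S predT z ->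
  forall cfg, cfg \in run A c z -> (cfg.2 < maxn c.2 K + K ^ 2)%N.
Proof.
move=> q_gt0 K min_wit cfg /mem_run_conf[i iL ->].
rewrite -/(counter A c z i) ltnNge; apply/negP => high; set base := maxn c.2 K in high.
have c0 : counter A c z 0 = c.2 by rewrite /counter /conf take0.
have K_gt0 : 0 < K by rewrite muln_gt0 q_gt0; apply/card_gt0P; exists (p0 A).
have [notV _ _] := witness_end (proj1 min_wit).
have [e eV e_end] := separating_cV notV.
pose ends l := (state A c z (excursion_start A c z i l), state A c z (excursion_end A c z i l)).
have [t0 many] : exists t0, q * q < count (fun l => ends l == t0) (iota base (K ^ 2).+1).
  by apply: pigeonhole_count; rewrite card_prod size_iota /K; nia.
set s := [seq l <- iota base (K ^ 2).+1 | ends l == t0].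
have s_level l : l \in s -> [/\ counter A c z 0 <= l, 0 < l, l <= counter A c z i & ends l = t0].
  have [c_le K_le] : c.2 <= base /\ K <= base by rewrite leq_maxl leq_maxr.
  by rewrite c0 mem_filter mem_iota => /andP[/eqP ? ?]; split => //; lia.
suff : size s <= q * q by rewrite size_filter leqNgt many.
apply: (@triangular_mx_size _ _ _ (fun l => weight A c z (excursion_start A c z i l))
  (excursion_mx A c z i) (fun l => suffix_mx A c z i l *m e)).
- by apply: sorted_filter; [exact: ltn_trans | exact: iota_ltn_sorted].
- by move=> l _; rewrite mulmxA -weight_excursion.
- move=> j k /s_level[c0_j j_gt0 _ ends_j] /s_level[_ _ k_le ends_k] jk.
  case: (etrans ends_j (esym ends_k)) => state_start state_end.
  by rewrite mulmxA eV // (minimal_witness_pump iL c0_j j_gt0 jk k_le min_wit).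
Qed.
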